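(* Let $B=\bigoplus_{i\in\mathbb{Z}}B_i$ be a $\mathbb{Z}$-graded integral domain with $e(B)=1$. For each $d\in\mathbb{N}\setminus\{0,1\}$ we have $\mathcal{X}_d\neq\emptyset$, and the following are equivalent: (a) no height-$1$ prime ideal of $B$ contains $\mathcal{X}_d$; (b) $\gcd(e(B/\mathfrak{p}),d)=1$ for every homogeneous prime ideal $\mathfrak{p}$ of $B$ of height $1$; (c) $d\in\Pi^*(B)$.
   Context: For a $\mathbb{Z}$-graded domain $C$, $e(C)=\gcd\{i\in\mathbb{Z}:C_i\neq0\}$. $\mathcal{X}_d$ is the set of nonzero homogeneous $x\in B$ with $\gcd(\deg x,d)=1$. $\Pi(B)$ is the set of primes $p$ with $p\mid e(B/\mathfrak{p})$ for some homogeneous height-$1$ prime $\mathfrak{p}$ of $B$; $\Pi^*(B)$ is the set of positive integers not divisible by any element of $\Pi(B)$. *)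

From Stdlib Require Import ClassicalEpsilon.
From mathcomp Require Import all_boot all_order all_algebra.
Set Implicit Arguments. Unset Strict Implicit. Unset Printing Implicit Defensive.
Import Order.TTheory GRing.Theory Num.Theory.
Local Open Scope ring_scope.

(* gcd of an arbitrary (possibly infinite) set of integers: the unique
   natural number n such that n divides every element of S and every
   common divisor of S divides n (n = 0 iff S is contained in {0}). *)
Definition is_gcd_set (S : int -> Prop) (n : nat) : Prop :=
  (forall i, S i -> (n%:Z %| i)%Z) /\
  (forall m : nat, (forall i, S i -> (m%:Z %| i)%Z) -> (m %| n)%N).

Definition gcd_set (S : int -> Prop) : nat :=
  epsilon (inhabits 0%N) (is_gcd_set S).

Section Graded.
Variable B : idomainType.
(* G i is the homogeneous component B_i *)
Variable G : int -> B -> Prop.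

Definition is_Zgrading : Prop :=
  [/\ (forall i, G i 0),
      (forall i x y, G i x -> G i y -> G i (x - y)),
      (forall i j x y, G i x -> G j y -> G (i + j) (x * y)),
      (forall x : B, exists (s : seq int) (f : int -> B),
          [/\ uniq s, forall i, G i (f i) & x = \sum_(i <- s) f i])
    & (forall (s : seq int) (f : int -> B), uniq s -> (forall i, G i (f i)) ->
          \sum_(i <- s) f i = 0 -> forall i, i \in s -> f i = 0)].

Definition e_ring : nat := gcd_set (fun i => exists x, G i x /\ x <> 0).

Definition is_ideal (I : B -> Prop) : Prop :=
  [/\ I 0, (forall x y, I x -> I y -> I (x - y)) & (forall a x, I x -> I (a * x))].

Definition is_prime_ideal (P : B -> Prop) : Prop :=
  [/\ is_ideal P, ~ P 1 & (forall x y, P (x * y) -> P x \/ P y)].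

Definition strict_incl (P Q : B -> Prop) : Prop :=
  (forall x, P x -> Q x) /\ exists x, Q x /\ ~ P x.

Definition prime_chain_to (P : B -> Prop) (n : nat) : Prop :=
  exists q : nat -> B -> Prop,
    [/\ forall k, (k <= n)%N -> is_prime_ideal (q k),
        forall k, (k < n)%N -> strict_incl (q k) (q k.+1)
      & forall x, q n x <-> P x].

Definition height_one (P : B -> Prop) : Prop :=
  is_prime_ideal P /\ prime_chain_to P 1 /\ ~ prime_chain_to P 2.

Definition is_homogeneous_ideal (P : B -> Prop) : Prop :=
  is_ideal P /\
  forall x, P x -> forall (s : seq int) (f : int -> B),
    uniq s -> (forall i, G i (f i)) -> x = \sum_(i <- s) f i ->
    forall i, i \in s -> P (f i).

(* e(B/P), where B/P carries the quotient grading (B/P)_i = image of B_i;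
   (B/P)_i <> 0 iff some x in B_i is not in P. *)
Definition e_quot (P : B -> Prop) : nat :=
  gcd_set (fun i => exists x, G i x /\ ~ P x).

Definition X_set (d : nat) (x : B) : Prop :=
  x <> 0 /\ exists i : int, G i x /\ coprime `|i|%N d.

Definition Pi_set (p : nat) : Prop :=
  prime p /\ exists P, is_homogeneous_ideal P /\ height_one P /\ (p %| e_quot P)%N.

Definition Pi_star (d : nat) : Prop :=
  (0 < d)%N /\ forall p, Pi_set p -> ~~ (p %| d)%N.

End Graded.

(* The degrees of the homogeneous elements outside a prime P form an additively
   closed set of integers whose gcd is e(B/P), and an additively closed set whose
   gcd is prime to d contains an element prime to d: add up multiples of elements
   avoiding the various prime factors of d.  Taking P = 0 shows X_d is nonempty;
   (b) <-> (c) is elementary.  If e(B/P) and d share a factor, every homogeneous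
   element of degree prime to d lies in P, whence (a) -> (b).  Conversely, a
   height-one prime P containing X_d contains a nonzero homogeneous element, so
   the elements all of whose homogeneous components lie in P form a nonzero prime
   inside P; since P has height one it equals P, so P is homogeneous, and (b)
   then yields an element of X_d outside P. *)

From Stdlib Require Import ClassicalEpsilon.
From mathcomp Require Import all_boot all_order all_algebra.
From mathcomp Require Import boolp.
Set Implicit Arguments. Unset Strict Implicit. Unset Printing Implicit Defensive.
Import Order.TTheory GRing.Theory Num.Theory.
Local Open Scope ring_scope.

Lemma coprime_prime_dvdP (m d : nat) : (0 < d)%N ->
  coprime m d <-> (forall p, prime p -> (p %| m)%N -> ~~ (p %| d)%N).
Proof.
move=> d_gt0; split=> [cop p p_pr pm | no_common].
  by rewrite -prime_coprime // (coprime_dvdl pm cop).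
apply: contraT => not_cop.
have g_gt1 : (1 < gcdn m d)%N by rewrite ltn_neqAle eq_sym not_cop gcdn_gt0 d_gt0 orbT.
have [p p_pr p_g] := pdivP g_gt1.
have := no_common p p_pr (dvdn_trans p_g (dvdn_gcdl m d)).
by rewrite (dvdn_trans p_g (dvdn_gcdr m d)).
Qed.

Lemma gcd_setP (S : int -> Prop) : is_gcd_set S (gcd_set S).
Proof.
apply: epsilon_spec.
have [[i0 S_i0 i0_neq0] | S_sub0] := asboolP (exists2 i, S i & i != 0).
  pose cd (m : nat) := forall i, S i -> (m%:Z %| i)%Z.
  have cd_le m : cd m -> (m < `|i0|.+1)%N.
    by move=> /(_ _ S_i0) m_i0; rewrite ltnS dvdn_leq ?absz_gt0.
  exists (\big[lcmn/1%N]_(m < `|i0|.+1 | `[< cd m >]) m); split.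
    by move=> i Si; apply/dvdn_biglcmP => m /asboolP /(_ _ Si).
  by move=> m cd_m; rewrite (biglcmn_sup (Ordinal (cd_le m cd_m))) //; apply/asboolP.
exists 0%N; split=> [i Si | m _]; last exact: dvdn0.
have /negbNE/eqP -> : ~~ (i != 0) by apply/negP => i_neq0; apply: S_sub0; exists i.
exact: dvdz0.
Qed.

(* The witness is [\sum_p w_p * \prod_(q != p) q] for some [w_p] in [S] prime to [p]. *)
Lemma addr_closed_avoid_primes (S : int -> Prop) (ps : seq nat) :
  (forall a b, S a -> S b -> S (a + b)) -> uniq ps -> all prime ps -> ps != [::] ->
  (forall p, p \in ps -> exists i, S i /\ ~~ (p %| `|i|)%N) ->
  exists2 s, S s & forall p, p \in ps -> ~~ (p %| `|s|)%N.
Proof.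
move=> S_add ps_uniq /allP ps_prime ps_nil avoid.
pose w p := epsilon (inhabits 0) (fun i => S i /\ ~~ (p %| `|i|)%N).
have wP p : p \in ps -> S (w p) /\ ~~ (p %| `|w p|)%N.
  by move=> pps; apply: (epsilon_spec _ (fun i => S i /\ ~~ _) (avoid p pps)).
pose Q p := (\prod_(q <- ps | q != p) q)%N.
pose s := \sum_(p <- ps) w p *+ Q p.
have s_ndiv p : p \in ps -> ~~ (p%:Z %| s)%Z.
  move=> pps; rewrite /s (bigD1_seq p pps ps_uniq) /= rpredDr.
    rewrite dvdzE -mulr_natr abszM natz absz_nat Euclid_dvdM ?ps_prime //.
    rewrite negb_or (wP p pps).2 /Q Euclid_dvd_prod ?ps_prime // big_has_cond.
    by apply/hasPn => q qps /=; rewrite dvdn_prime2 ?ps_prime // eq_sym andNb.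
  apply: rpred_sum => q qp; rewrite -mulr_natr; apply: dvdz_mull.
  by rewrite natz dvdzE !absz_nat /Q (big_rem p pps) eq_sym qp dvdn_mulr.
pose T i := S i \/ i = 0.
have T_add a b : T a -> T b -> T (a + b).
  by move=> [Sa|->] [Sb|->]; rewrite ?addr0 ?add0r; [left; apply: S_add|left|left|right].
have T_mulrn a n : T a -> T (a *+ n).
  by move=> Ta; elim: n => [|n IH]; [right | rewrite mulrS; apply: T_add].
have [Ss | s0] : T s.
- rewrite /s big_seq; apply: big_ind => [|a b|p pps]; [by right | exact: T_add |].
  by apply: T_mulrn; left; apply: (wP p pps).1.
- by exists s => // p /s_ndiv.
- have ps_head : head 0%N ps \in ps by rewrite -nth0 mem_nth // lt0n size_eq0.
  by have := s_ndiv _ ps_head; rewrite s0 dvdz0.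
Qed.

Lemma coprime_gcd_set_witness (S : int -> Prop) (d : nat) :
  (forall a b, S a -> S b -> S (a + b)) -> (1 < d)%N ->
  coprime (gcd_set S) d -> exists2 s, S s & coprime `|s| d.
Proof.
move=> S_add d_gt1 cop; have d_gt0 : (0 < d)%N by apply: ltnW.
have [_ gcd_max] := gcd_setP S.
have avoid p : p \in primes d -> exists i, S i /\ ~~ (p %| `|i|)%N.
  rewrite mem_primes => /and3P[p_pr _ pd]; apply: NNPP => all_div.
  have p_gcd : (p %| gcd_set S)%N.
    by apply: gcd_max => i Si; apply/negPn/negP => ndiv; apply: all_div; exists i.
  by have := (coprime_prime_dvdP _ d_gt0).1 cop p p_pr p_gcd; rewrite pd.
have primes_d : all prime (primes d) by apply/allP => p; rewrite mem_primes => /andP[].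
have pdiv_d : pdiv d \in primes d by rewrite mem_primes pdiv_prime // d_gt0 pdiv_dvd.
have primes_nil : primes d != [::] by apply: contraTneq pdiv_d => ->.
have [s Ss s_ndiv] := addr_closed_avoid_primes S_add (primes_uniq d) primes_d primes_nil avoid.
exists s => //; apply/(coprime_prime_dvdP _ d_gt0) => p p_pr ps.
apply/negP => pd; have := s_ndiv p.
by rewrite mem_primes p_pr d_gt0 pd ps => /(_ isT).
Qed.

Lemma big_mem_subset (R : Type) (idx : R) (op : Monoid.com_law idx)
    (I : eqType) (s u : seq I) (F : I -> R) :
  uniq s -> uniq u -> {subset s <= u} ->
  \big[op/idx]_(i <- u | i \in s) F i = \big[op/idx]_(i <- s) F i.
Proof.
move=> s_uniq u_uniq s_u; rewrite -big_filter; apply: perm_big.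
apply: uniq_perm => [|//|i]; first exact: filter_uniq.
by rewrite mem_filter; case: (boolP (i \in s)) => // /s_u.
Qed.

Section Ideals.
Variable B : idomainType.
Implicit Type P : B -> Prop.

Lemma idealD P x y : is_ideal P -> P x -> P y -> P (x + y).
Proof.
case=> P0 PB _ Px Py; have := PB x (0 - y) Px (PB 0 y P0 Py).
by rewrite sub0r opprK.
Qed.

Lemma idealMr P a x : is_ideal P -> P x -> P (x * a).
Proof. by case=> _ _ PM Px; rewrite mulrC; apply: PM. Qed.

Lemma ideal_sum P (I : Type) (s : seq I) (C : pred I) (F : I -> B) :
  is_ideal P -> (forall i, C i -> P (F i)) -> P (\sum_(i <- s | C i) F i).
Proof.
move=> P_ideal PF; apply: (big_ind P) => //; first by case: P_ideal.
by move=> x y; apply: idealD.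
Qed.

Lemma zero_prime_ideal : is_prime_ideal (fun x : B => x = 0).
Proof.
split; first split=> [//|x y -> ->|a x ->]; rewrite ?subrr ?mulr0 //.
  by move/eqP; rewrite oner_eq0.
by move=> x y /eqP; rewrite mulf_eq0 => /orP[/eqP|/eqP]; [left|right].
Qed.

Lemma prime_chain3 (Q0 Q1 Q2 : B -> Prop) :
  is_prime_ideal Q0 -> is_prime_ideal Q1 -> is_prime_ideal Q2 ->
  strict_incl Q0 Q1 -> strict_incl Q1 Q2 -> prime_chain_to Q2 2.
Proof.
move=> Q0_pr Q1_pr Q2_pr Q01 Q12.
exists (fun k => if k == 0%N then Q0 else if k == 1%N then Q1 else Q2).
by split=> [[|[|[|k]]]|[|[|k]]|].
Qed.

End Ideals.

Section HomogeneousComponents.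
Variables (B : idomainType) (G : int -> B -> Prop).
Hypothesis hG : is_Zgrading G.

Lemma homog0 i : G i 0.
Proof. by case: hG. Qed.

Lemma homogB i x y : G i x -> G i y -> G i (x - y).
Proof. by case: hG => _ + _ _ _; apply. Qed.

Lemma homogM i j x y : G i x -> G j y -> G (i + j) (x * y).
Proof. by case: hG => _ _ + _ _; apply. Qed.

Lemma homog_sum_eq0 (s : seq int) (f : int -> B) : uniq s -> (forall i, G i (f i)) ->
  \sum_(i <- s) f i = 0 -> forall i, i \in s -> f i = 0.
Proof. by case: hG => _ _ _ _; apply. Qed.

Definition homog_decomposition (x : B) (sf : seq int * (int -> B)) : Prop :=
  [/\ uniq sf.1, forall i, G i (sf.2 i) & x = \sum_(i <- sf.1) sf.2 i].

Definition decomposition (x : B) : seq int * (int -> B) :=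
  epsilon (inhabits ([::], fun=> 0)) (homog_decomposition x).

Lemma decompositionP x : homog_decomposition x (decomposition x).
Proof.
apply: epsilon_spec; case: hG => _ _ _ + _ => /(_ x) [s [f [s_uniq Gf ->]]].
by exists (s, f).
Qed.

Definition support (x : B) : seq int := (decomposition x).1.

Definition component (k : int) (x : B) : B :=
  if k \in support x then (decomposition x).2 k else 0.

Lemma support_uniq x : uniq (support x).
Proof. by case: (decompositionP x). Qed.

Lemma componentP k x : G k (component k x).
Proof. by rewrite /component; case: ifP => _; [case: (decompositionP x) | apply: homog0]. Qed.

Lemma component_notin_support k x : k \notin support x -> component k x = 0.
Proof. by rewrite /component => /negPf ->. Qed.

Lemma sum_component x s : uniq s -> {subset support x <= s} ->
  \sum_(i <- s) component i x = x.
Proof.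
move=> s_uniq sub; rewrite /component -big_mkcond big_mem_subset //.
  by case: (decompositionP x).
exact: support_uniq.
Qed.

Lemma component_eq x s f : uniq s -> (forall i, G i (f i)) ->
  x = \sum_(i <- s) f i -> forall k, component k x = if k \in s then f k else 0.
Proof.
move=> s_uniq Gf x_sum k; pose u := undup (support x ++ s).
have u_uniq : uniq u := undup_uniq _.
have u_mem i : (i \in u) = (i \in support x) || (i \in s) by rewrite mem_undup mem_cat.
pose g i := component i x - (if i \in s then f i else 0).
have Gg i : G i (g i).
  by apply: homogB; [apply: componentP | case: ifP => _; [apply: Gf | apply: homog0]].
have sum_g : \sum_(i <- u) g i = 0.
  rewrite sumrB sum_component // => [|i]; last by rewrite u_mem => ->.
  rewrite -big_mkcond big_mem_subset -?x_sum ?subrr // => i.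
  by rewrite u_mem => ->; rewrite orbT.
case: (boolP (k \in u)) => [ku | ].
  by apply/eqP; rewrite -subr_eq0; apply/eqP; apply: (homog_sum_eq0 u_uniq Gg sum_g).
by rewrite u_mem negb_or => /andP[k_supp /negPf ->]; rewrite component_notin_support.
Qed.

Lemma component_homog i a k : G i a -> component k a = if k == i then a else 0.
Proof.
move=> Ga; rewrite (@component_eq a [:: i] (fun j => if j == i then a else 0)) //.
- by rewrite inE; case: (k == i).
- by move=> j; case: ifP => [/eqP -> // | _]; apply: homog0.
- by rewrite big_seq1 eqxx.
Qed.

Lemma component0 k : component k 0 = 0.
Proof. by rewrite (component_homog k (homog0 0)); case: ifP. Qed.

Lemma componentB k x y : component k (x - y) = component k x - component k y.
Proof.
pose u := undup (support x ++ support y).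
have u_mem i : (i \in u) = (i \in support x) || (i \in support y) by rewrite mem_undup mem_cat.
have xy_sum : x - y = \sum_(i <- u) (component i x - component i y).
  by rewrite sumrB !sum_component ?undup_uniq // => i; rewrite u_mem => ->; rewrite ?orbT.
rewrite (component_eq (undup_uniq _) _ xy_sum) => [|i]; last by apply: homogB; apply: componentP.
case: ifP => // /negbT; rewrite u_mem negb_or => /andP[kx ky].
by rewrite !component_notin_support // subrr.
Qed.

Lemma componentD k x y : component k (x + y) = component k x + component k y.
Proof.
have componentN z : component k (- z) = - component k z.
  by rewrite -sub0r componentB component0 sub0r.
by rewrite -[y]opprK componentB !componentN opprK.
Qed.

Lemma component_sum k (s : seq int) (F : int -> B) :
  component k (\sum_(i <- s) F i) = \sum_(i <- s) component k (F i).
Proof. by apply: big_morph => [x y|]; [apply: componentD | apply: component0]. Qed.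

Lemma componentM_homog i a y k : G i a -> component k (a * y) = a * component (k - i) y.
Proof.
move=> Ga; pose t := [seq j + i | j <- support y].
have t_uniq : uniq t by rewrite map_inj_uniq; [exact: support_uniq | exact: addIr].
have ay_sum : a * y = \sum_(l <- t) a * component (l - i) y.
  rewrite big_map -{1}(sum_component (support_uniq y) (fun _ h => h)) mulr_sumr.
  by apply: eq_bigr => j _; rewrite addrK.
have Gf l : G l (a * component (l - i) y).
  by have := homogM Ga (componentP (l - i) y); rewrite addrC subrK.
rewrite (component_eq t_uniq Gf ay_sum); case: ifP => // /negbT kt.
rewrite component_notin_support ?mulr0 //; apply: contra kt => kiy.
by apply/mapP; exists (k - i); rewrite ?subrK.
Qed.

Lemma componentM x y k :
  component k (x * y) = \sum_(i <- support x) component i x * component (k - i) y.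
Proof.
rewrite -{1}(sum_component (support_uniq x) (fun _ h => h)) mulr_suml component_sum.
by apply: eq_bigr => i _; apply: componentM_homog; apply: componentP.
Qed.

End HomogeneousComponents.

Section HomogeneousCore.
Variables (B : idomainType) (G : int -> B -> Prop).
Hypothesis hG : is_Zgrading G.
Implicit Type P : B -> Prop.

Local Notation component := (component G).
Local Notation support := (support G).

Definition homog_core P (x : B) : Prop := forall k, P (component k x).

Lemma homog_core_sub P x : is_ideal P -> homog_core P x -> P x.
Proof.
move=> P_ideal Px; rewrite -(sum_component hG (support_uniq hG x) (fun _ h => h)).
exact: ideal_sum.
Qed.

Lemma homog_core_homog P i a : is_ideal P -> G i a -> P a -> homog_core P a.
Proof.
by move=> P_ideal Ga Pa k; rewrite (component_homog hG k Ga); case: ifP; case: P_ideal.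
Qed.

Lemma homogeneous_ideal_of_core P :
  is_ideal P -> (forall x, P x -> homog_core P x) -> is_homogeneous_ideal G P.
Proof.
move=> P_ideal P_core; split=> // x Px s f s_uniq Gf x_sum i i_s.
by have := component_eq hG s_uniq Gf x_sum i; rewrite i_s => <-; apply: P_core.
Qed.

Lemma exists_top_component P x : is_ideal P -> ~ homog_core P x ->
  exists a, ~ P (component a x) /\ forall i, a < i -> P (component i x).
Proof.
move=> [P0 _ _] /existsNP[k nPk].
pose a := \big[Num.max/k]_(i <- support x | `[< ~ P (component i x) >]) i.
exists a; split.
  by apply: (big_ind (fun j => ~ P (component j x))) => // [i j | i /asboolP] //; case: leP.
move=> i ai; case: (boolP (i \in support x)) => [i_x | /component_notin_support -> //].
have [//|nPi] := asboolP (P (component i x)).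
by move: ai; rewrite ltNge (le_bigmax_seq _ _ _ _ i_x (asboolT nPi)).
Qed.

Lemma homog_core_prime P : is_prime_ideal P -> is_prime_ideal (homog_core P).
Proof.
move=> [P_ideal P_neq1 P_prime]; have [P0 PB PM] := P_ideal.
split; first split.
- by move=> k; rewrite component0.
- by move=> x y Px Py k; rewrite componentB //; apply: PB.
- by move=> a x Px k; rewrite componentM //; apply: ideal_sum => // i _; apply: PM.
- by move/(homog_core_sub P_ideal).
move=> x y Pxy; apply: NNPP => /not_or_and[nPx nPy].
have [a [nPa Pa_gt]] := exists_top_component P_ideal nPx.
have [b [nPb Pb_gt]] := exists_top_component P_ideal nPy.
have a_supp : a \in support x.
  by apply/negPn/negP => /component_notin_support ax0; apply: nPa; rewrite ax0.
have := Pxy (a + b); rewrite componentM // (bigD1_seq a a_supp (support_uniq hG x)) /=.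
rewrite addrAC subrr add0r => P_sum.
(* Every other summand x_i y_(a+b-i) has i > a or a + b - i > b. *)
have P_rest : P (\sum_(i <- support x | i != a) component i x * component (a + b - i) y).
  apply: ideal_sum => // i; rewrite neq_lt => /orP[ia | ai].
  - by apply: PM; apply: Pb_gt; rewrite addrAC ltrDr subr_gt0.
  - by apply: idealMr => //; apply: Pa_gt.
by have := PB _ _ P_sum P_rest; rewrite addrK => /P_prime[].
Qed.

Lemma height_one_homogeneous P i a :
  height_one P -> G i a -> a <> 0 -> P a -> is_homogeneous_ideal G P.
Proof.
move=> [P_pr [_ no_chain2]] Ga a_neq0 Pa; have [P_ideal _ _] := P_pr.
apply: homogeneous_ideal_of_core => // x Px; apply: NNPP => nPx; apply: no_chain2.
apply: (prime_chain3 (zero_prime_ideal B) (homog_core_prime P_pr) P_pr).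
- split; first by move=> z -> k; rewrite component0 //; case: P_ideal.
  by exists a; split=> //; apply: homog_core_homog Ga Pa.
- by split=> [z|]; [apply: homog_core_sub | exists x].
Qed.

End HomogeneousCore.

Section DegreesOutsidePrimes.
Variables (B : idomainType) (G : int -> B -> Prop).
Hypothesis hG : is_Zgrading G.
Implicit Type P : B -> Prop.

Lemma degrees_outside_prime_addr_closed P : is_prime_ideal P ->
  forall a b, (exists x, G a x /\ ~ P x) -> (exists y, G b y /\ ~ P y) ->
  exists z, G (a + b) z /\ ~ P z.
Proof.
move=> [_ _ P_prime] a b [x [Gx nPx]] [y [Gy nPy]].
by exists (x * y); split; [apply: homogM | case/P_prime].
Qed.

Lemma exists_X_set_outside P d : is_prime_ideal P -> (1 < d)%N ->
  coprime (e_quot G P) d -> exists2 x, X_set G d x & ~ P x.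
Proof.
move=> P_pr d_gt1 cop.
have [i [x [Gx nPx]] i_cop] :=
  coprime_gcd_set_witness (degrees_outside_prime_addr_closed P_pr) d_gt1 cop.
exists x => //; split; last by exists i.
by move=> x0; apply: nPx; rewrite x0; case: P_pr => [[]].
Qed.

(* A homogeneous element outside P has degree divisible by e(B/P). *)
Lemma X_set_sub_of_not_coprime P d :
  ~~ coprime (e_quot G P) d -> forall x, X_set G d x -> P x.
Proof.
move=> ncop x [_ [i [Gx i_cop]]]; apply: NNPP => nPx; apply: (negP ncop).
have [e_dvd _] := gcd_setP (fun i => exists x, G i x /\ ~ P x).
have e_i : (e_quot G P %| `|i|)%N := e_dvd i (ex_intro _ x (conj Gx nPx)).
exact: coprime_dvdl e_i i_cop.
Qed.

Lemma coprime_e_quot_Pi_star d : (0 < d)%N ->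
  (forall P, is_homogeneous_ideal G P -> height_one P -> coprime (e_quot G P) d) <->
  Pi_star G d.
Proof.
move=> d_gt0; split=> [all_cop | [_ no_Pi] P P_hom P_h1].
  split=> // p [p_pr [P [P_hom [P_h1 pe]]]].
  exact: (coprime_prime_dvdP _ d_gt0).1 (all_cop P P_hom P_h1) p p_pr pe.
apply/(coprime_prime_dvdP _ d_gt0) => p p_pr pe.
by apply: no_Pi; split=> //; exists P.
Qed.

End DegreesOutsidePrimes.

Theorem lemma3p10 (B : idomainType) (G : int -> B -> Prop)
  (hG : is_Zgrading G) (he : e_ring G = 1%N) (d : nat) (hd : (2 <= d)%N) :
  (exists x, X_set G d x) /\
  ((~ exists P, height_one P /\ forall x, X_set G d x -> P x) <->
   (forall P, is_homogeneous_ideal G P -> height_one P -> coprime (e_quot G P) d)) /\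
  ((forall P, is_homogeneous_ideal G P -> height_one P -> coprime (e_quot G P) d) <->
   Pi_star G d).
Proof.
have d_gt1 : (1 < d)%N := hd.
have X_nonempty : exists x, X_set G d x.
  (* e(B) is e(B/0). *)
  have cop0 : coprime (e_quot G (fun x : B => x = 0)) d by rewrite [e_quot _ _]he coprime1n.
  by have [x Xx _] := exists_X_set_outside hG (zero_prime_ideal B) d_gt1 cop0; exists x.
split=> //; split; last exact: coprime_e_quot_Pi_star (ltnW d_gt1).
split=> [no_P P P_hom P_h1 | all_cop [P [P_h1 X_P]]].
  apply/negPn/negP => ncop; apply: no_P; exists P; split=> //.
  exact: X_set_sub_of_not_coprime ncop.
have [x0 X_x0] := X_nonempty; have [x0_neq0 [i0 [Gx0 _]]] := X_x0.
have P_hom := height_one_homogeneous hG P_h1 Gx0 x0_neq0 (X_P x0 X_x0).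
have [x Xx nPx] := exists_X_set_outside hG P_h1.1 d_gt1 (all_cop P P_hom P_h1).
exact: nPx (X_P x Xx).
Qed.
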